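(* Let $m,n\geq 6$. Then $\phi(P_{m-5}\cup W_{n-1},x)=\phi(P_{n-5}\cup W_{m-1},x)$; that is, $P_{m-5}\cup W_{n-1}$ and $P_{n-5}\cup W_{m-1}$ are cospectral with respect to the adjacency matrix. Moreover $ME(P_{m-5}\cup W_{n-1})=ME(P_{n-5}\cup W_{m-1})$.
   Context: $P_t$ denotes the path with $t$ edges (vertices $v_1,\dots,v_{t+1}$). For $N\geq 5$, $W_N$ is the tree obtained from $P_{N-2}$ (vertices $v_1,\dots,v_{N-1}$) by attaching one new pendent vertex to $v_2$ and one new pendent vertex to $v_{N-2}$. $\cup$ denotes disjoint union. $\phi(G,x)$ is the characteristic polynomial of the adjacency matrix of the graph $G$. For a graph $G$ on $n'$ vertices with $m(G,k)$ the number of $k$-edge matchings ($m(G,0)=1$), the matching polynomial is $\varphi(G,x)=\sum_{k\geq0}(-1)^km(G,k)x^{n'-2k}$ and the matching energy $ME(G)$ is the sum of absolute values of all roots (with multiplicity) of $\varphi(G,x)$. *)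

From HB Require Import structures.
From mathcomp Require Import all_boot all_order all_algebra all_field.
Set Implicit Arguments. Unset Strict Implicit. Unset Printing Implicit Defensive.
Import Order.TTheory GRing.Theory Num.Theory.
Local Open Scope ring_scope.

(* A finite simple graph on the vertex set 'I_nv, given by a symmetric
   irreflexive adjacency relation (all graphs built below are such). *)
Record sgraph := SGraph { nv : nat; adj : rel 'I_nv }.

(* P_t : path with t edges, vertices v_1..v_{t+1} encoded as 0..t. *)
Definition path_graph (t : nat) : sgraph :=
  @SGraph t.+1 (fun i j => (i.+1 == j :> nat) || (j.+1 == i :> nat)).

(* W_N (meaningful for N >= 5): path v_1..v_{N-1} (encoded 0..N-2), plus a
   pendent vertex (index N-1) attached to v_2 (index 1) and a pendent vertex
   (index N) attached to v_{N-2} (index N-3). *)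
Definition W_edge (N : nat) (i j : nat) : bool :=
  [|| (i < N.-1) && (j < N.-1) && ((i.+1 == j) || (j.+1 == i)),
      (i == N.-1) && (j == 1%N), (j == N.-1) && (i == 1%N),
      (i == N) && (j == N - 3) | (j == N) && (i == N - 3)]%N.

Definition W_graph (N : nat) : sgraph :=
  @SGraph N.+1 (fun i j => W_edge N i j).

(* disjoint union G ∪ H : vertices of G first, then those of H *)
Definition dunion (G H : sgraph) : sgraph :=
  @SGraph (nv G + nv H) (fun i j =>
    match split i, split j with
    | inl a, inl b => adj a b
    | inr a, inr b => adj a b
    | _, _ => false
    end).

Definition adj_mx (G : sgraph) : 'M[int]_(nv G) :=
  \matrix_(i, j) (adj i j)%:R.

Definition charpoly_graph (G : sgraph) : {poly int} := char_poly (adj_mx G).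

Definition is_matching (G : sgraph) (M : {set 'I_(nv G) * 'I_(nv G)}) : bool :=
  [forall e in M, (e.1 < e.2)%N && adj e.1 e.2] &&
  [forall e1 in M, forall e2 in M,
     (e1 != e2) ==> [disjoint [set e1.1; e1.2] & [set e2.1; e2.2]]].

Definition num_matchings (G : sgraph) (k : nat) : nat :=
  #|[set M : {set 'I_(nv G) * 'I_(nv G)} | is_matching M && (#|M| == k)]|.

(* matching polynomial  sum_{k>=0} (-1)^k m(G,k) x^{n'-2k}  (terms with
   2k > n' vanish since m(G,k) = 0 there), with complex coefficients *)
Definition matching_poly (G : sgraph) : {poly algC} :=
  \sum_(k < (nv G)./2.+1)
     ((-1) ^+ k * (num_matchings G k)%:R) *: 'X^(nv G - 2 * k).

Definition matching_roots (G : sgraph) : seq algC :=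
  sval (closed_field_poly_normal (matching_poly G)).

Definition matching_energy (G : sgraph) : algC :=
  \sum_(z <- matching_roots G) `|z|.

From HB Require Import structures.
From mathcomp Require Import all_boot all_order all_algebra all_field.
From mathcomp Require Import zify ring.
Set Implicit Arguments. Unset Strict Implicit. Unset Printing Implicit Defensive.
Import GRing.Theory Num.Theory.

(* Both graphs are forests, and two invariants of them obey the same reduction rules:
   deleting an isolated vertex multiplies by x, and deleting a pendant vertex v with
   neighbour u gives Phi(G) = x Phi(G - v) + y Phi(G - v - u).  The characteristic
   polynomial does so with (x, y) = (X, -1), the matching generating polynomial
   sum_k m(G, k) t^k with (x, y) = (1, t).  For any such invariant, with p_b its value
   on the path with b vertices, peeling the pendant vertices off W_N gives
   Phi(W_N) = x^2 (x^2 + 4y) p_(N-3), so Phi(P_(m-5) ∪ W_(n-1)) = x^2 (x^2 + 4y) p_(m-4) p_(n-4)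
   is symmetric in m and n.  Equal matching numbers give equal matching polynomials,
   hence equal roots and equal matching energies. *)

Definition del_vertex (f : rel nat) (u : nat) : rel nat :=
  fun i j => f (bump u i) (bump u j).

Definition path_rel : rel nat := fun i j => (i.+1 == j) || (j.+1 == i).

Definition path_dunion (a : nat) (g : rel nat) : rel nat := fun i j =>
  (i < a) && (j < a) && path_rel i j || (a <= i) && (a <= j) && g (i - a) (j - a).

Lemma del_vertex_path_dunion a g t :
  del_vertex (path_dunion a g) (a + t) =2 path_dunion a (del_vertex g t).
Proof.
move=> i j; rewrite /del_vertex /path_dunion.
have bump_lt s : s < a -> bump (a + t) s = s by rewrite /bump; lia.
have bump_ge s : a <= s -> bump (a + t) s - a = bump t (s - a) by rewrite /bump; lia.
case: (ltnP i a) => hi; case: (ltnP j a) => hj.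
- by rewrite !bump_lt // !(leqNgt a) hi hj.
- rewrite bump_lt // (leqNgt a i) hi /= orbF /bump; lia.
- rewrite (bump_lt j) // (leqNgt a j) hj /= andbF orbF /bump; lia.
- have bump_ge_a s : a <= s -> a <= bump (a + t) s by rewrite /bump; lia.
  by rewrite !bump_ge // !bump_ge_a // ltnNge bump_ge_a.
Qed.

Lemma W_edgeE c i j : W_edge c.+4.+1 i j =
  [|| (i < c.+4) && (j < c.+4) && path_rel i j, (i == c.+4) && (j == 1),
      (j == c.+4) && (i == 1), (i == c.+4.+1) && (j == c.+2) | (j == c.+4.+1) && (i == c.+2)].
Proof. by []. Qed.

(* Splitting on the innermost [bump] first leaves [lia] a bump-free goal; cutting
   contradictory branches at once keeps the case tree small. *)
Ltac case_bump := repeat match goal with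
  | |- context [bump ?u ?t] =>
    assert_fails (idtac; match t with context [bump _ _] => idtac end);
    rewrite [bump u t]/bump; case: (leqP u t) => ? /=; try (exfalso; lia)
  end.

Ltac decide_rel := intros; try split; rewrite /del_vertex ?W_edgeE /path_rel; case_bump; lia.

Section PendantRecurrence.

Variables (R : comNzRingType) (x y : R) (Phi : rel nat -> nat -> R).

Hypothesis Phi_ext : forall f g k,
  (forall i j, i < k -> j < k -> f i j = g i j) -> Phi f k = Phi g k.
Hypothesis Phi_isolated : forall f k v, v <= k ->
  (forall j, j <= k -> ~~ f v j && ~~ f j v) ->
  Phi f k.+1 = (x * Phi (del_vertex f v) k)%R.
Hypothesis Phi_pendant : forall f k u, u <= k -> ~~ f k.+1 k.+1 ->
  (forall j, j <= k -> f k.+1 j = (j == u) /\ f j k.+1 = (j == u)) ->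
  Phi f k.+2 = (x * Phi f k.+1 + y * Phi (del_vertex f u) k)%R.
Hypothesis Phi_nil : forall f, Phi f 0 = 1%R.

Local Notation p b := (Phi path_rel b).

Lemma Phi_path1 : p 1 = x.
Proof.
by rewrite (Phi_isolated (v := 0)) ?Phi_nil ?mulr1 // => j; rewrite /path_rel; lia.
Qed.

Lemma Phi_pathSS b : p b.+2 = (x * p b.+1 + y * p b)%R.
Proof.
rewrite (Phi_pendant (u := b)) //; first last.
- by move=> j hj; rewrite /path_rel; lia.
- by rewrite /path_rel; lia.
congr (_ + y * _)%R; apply: Phi_ext => i j hi hj.
by rewrite /del_vertex /bump /path_rel; lia.
Qed.

Lemma Phi_path_dunion_ext a g h b :
  (forall i j, i < b -> j < b -> g i j = h i j) ->
  Phi (path_dunion a g) (a + b) = Phi (path_dunion a h) (a + b).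
Proof.
move=> gh; apply: Phi_ext => i j hi hj; rewrite /path_dunion.
by case: (ltnP i a) => hia; case: (ltnP j a) => hja //=; rewrite gh //; lia.
Qed.

Lemma Phi_path_dunion_isolated a g b v : v <= b ->
  (forall t, t <= b -> ~~ g v t && ~~ g t v) ->
  Phi (path_dunion a g) (a + b.+1) = (x * Phi (path_dunion a (del_vertex g v)) (a + b))%R.
Proof.
move=> hv g_v; have hav : a + v <= a + b by lia.
have iso j : j <= a + b -> ~~ path_dunion a g (a + v) j && ~~ path_dunion a g j (a + v).
  move=> hj; rewrite /path_dunion addKn.
  case: (ltnP j a) => hja; first by rewrite !andbF ?andFb !orbF /path_rel; lia.
  have /andP[/negbTE-> /negbTE->] : ~~ g v (j - a) && ~~ g (j - a) v by apply: g_v; lia.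
  by rewrite !andbF.
rewrite addnS (Phi_isolated hav iso); congr (_ * _)%R.
by apply: Phi_ext => i j _ _; rewrite del_vertex_path_dunion.
Qed.

Lemma Phi_path_dunion_pendant a g b u : u <= b -> ~~ g b.+1 b.+1 ->
  (forall t, t <= b -> g b.+1 t = (t == u) /\ g t b.+1 = (t == u)) ->
  Phi (path_dunion a g) (a + b.+2) =
    (x * Phi (path_dunion a g) (a + b.+1) + y * Phi (path_dunion a (del_vertex g u)) (a + b))%R.
Proof.
move=> hu g_loop g_b; have hau : a + u <= a + b by lia.
have hab : (a + b).+1 - a = b.+1 by lia.
have loop : ~~ path_dunion a g (a + b).+1 (a + b).+1.
  by rewrite /path_dunion hab (negbTE g_loop); lia.
have pend j : j <= a + b ->
    path_dunion a g (a + b).+1 j = (j == a + u) /\ path_dunion a g j (a + b).+1 = (j == a + u).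
  move=> hj; rewrite /path_dunion hab.
  case: (ltnP j a) => hja; first by rewrite !andbF ?andFb !orbF /path_rel; lia.
  have [-> ->] : g b.+1 (j - a) = (j - a == u) /\ g (j - a) b.+1 = (j - a == u).
    by apply: g_b; lia.
  lia.
rewrite !addnS (Phi_pendant hau loop pend) -addnS; congr (_ + y * _)%R.
by apply: Phi_ext => i j _ _; rewrite del_vertex_path_dunion.
Qed.

Lemma Phi_path_dunion_path a b : Phi (path_dunion a path_rel) (a + b) = (p a * p b)%R.
Proof.
have Phi_a0 g : Phi (path_dunion a g) (a + 0) = p a.
  by rewrite addn0; apply: Phi_ext => i j hi hj; rewrite /path_dunion; lia.
suff [] : Phi (path_dunion a path_rel) (a + b) = (p a * p b)%R /\
          Phi (path_dunion a path_rel) (a + b.+1) = (p a * p b.+1)%R by [].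
elim: b => [|b [IHb IHb1]].
  split; first by rewrite Phi_a0 Phi_nil mulr1.
  rewrite (@Phi_path_dunion_isolated a _ 0 0) //; last by move=> t; rewrite /path_rel; lia.
  by rewrite Phi_a0 Phi_path1 mulrC.
split=> //; rewrite (@Phi_path_dunion_pendant a _ b b) //; first last.
- by move=> t ht; rewrite /path_rel; lia.
- by rewrite /path_rel; lia.
rewrite IHb1 (@Phi_path_dunion_ext a _ path_rel) ?IHb ?Phi_pathSS; first by ring.
by move=> i j hi hj; rewrite /del_vertex /bump /path_rel; lia.
Qed.

Lemma Phi_path_dunion_prefix a g b :
  (forall i j, i < b -> j < b -> g i j = path_rel i j) ->
  Phi (path_dunion a g) (a + b) = (p a * p b)%R.
Proof. by move=> g_path; rewrite (Phi_path_dunion_ext _ g_path) Phi_path_dunion_path. Qed.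

Lemma Phi_path_dunion_W a N : 5 <= N ->
  Phi (path_dunion a (W_edge N)) (a + N.+1) =
    (x ^+ 2 * (x ^+ 2 + 4%:R * y) * p a * p (N - 3))%R.
Proof.
case: N => [|[|[|[|[|c]]]]] // _.
have Phi_W_minus_leaf : Phi (path_dunion a (W_edge c.+4.+1)) (a + c.+4.+1) =
    (x * (p a * p c.+4) + y * (x * (p a * p c.+2)))%R.
  rewrite (@Phi_path_dunion_pendant a _ c.+3 1) //; [|decide_rel..].
  rewrite (@Phi_path_dunion_prefix a _ c.+4); [|decide_rel].
  rewrite (@Phi_path_dunion_isolated a _ c.+2 0) //; [|decide_rel].
  by rewrite (@Phi_path_dunion_prefix a _ c.+2); [|decide_rel].
have Phi_W_minus_leaf_nbr :
    Phi (path_dunion a (del_vertex (W_edge c.+4.+1) c.+2)) (a + c.+4) =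
    (x * (x * (p a * p c.+2)) + y * (x * (x * (p a * p c))))%R.
  rewrite (@Phi_path_dunion_pendant a _ c.+2 1) //; [|decide_rel..].
  rewrite (@Phi_path_dunion_isolated a _ c.+2 c.+2) //; [|decide_rel].
  rewrite (@Phi_path_dunion_prefix a _ c.+2); [|decide_rel].
  rewrite (@Phi_path_dunion_isolated a _ c.+1 c.+1) //; [|decide_rel].
  rewrite (@Phi_path_dunion_isolated a _ c 0) //; [|decide_rel].
  by rewrite (@Phi_path_dunion_prefix a _ c); [|decide_rel].
rewrite (@Phi_path_dunion_pendant a _ c.+4 c.+2) //; [|decide_rel..].
rewrite Phi_W_minus_leaf Phi_W_minus_leaf_nbr (_ : c.+4.+1 - 3 = c.+2) //.
by rewrite !Phi_pathSS; ring.
Qed.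

Lemma Phi_path_dunion_W_sym m n : 6 <= m -> 6 <= n ->
  Phi (path_dunion (m - 5).+1 (W_edge (n - 1))) ((m - 5).+1 + (n - 1).+1) =
  Phi (path_dunion (n - 5).+1 (W_edge (m - 1))) ((n - 5).+1 + (m - 1).+1).
Proof.
move=> hm hn; rewrite !Phi_path_dunion_W; [|lia..].
have -> : n - 1 - 3 = (n - 5).+1 by lia.
have -> : m - 1 - 3 = (m - 5).+1 by lia.
by rewrite mulrAC.
Qed.

End PendantRecurrence.

Definition rel_graph (f : rel nat) (k : nat) : sgraph := @SGraph k (fun i j : 'I_k => f i j).

Section CharPoly.
Local Open Scope ring_scope.

Lemma charpoly_graph_eq_adj n (a1 a2 : rel 'I_n) :
  a1 =2 a2 -> charpoly_graph (SGraph a1) = charpoly_graph (SGraph a2).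
Proof.
move=> a12; rewrite /charpoly_graph /char_poly; congr (\det _).
by apply/matrixP => i j; rewrite !mxE /= a12.
Qed.

Local Notation char_mx f k := (char_poly_mx (adj_mx (rel_graph f k))).
Local Notation charpoly f k := (charpoly_graph (rel_graph f k)).

Lemma char_mxE f k (i j : 'I_k) :
  char_mx f k i j = 'X *+ (i == j :> nat) - ((f i j)%:R : int)%:P.
Proof. by rewrite !mxE. Qed.

Lemma charpoly_ext f g k : (forall i j, (i < k)%N -> (j < k)%N -> f i j = g i j) ->
  charpoly f k = charpoly g k.
Proof.
by move=> fg; apply: charpoly_graph_eq_adj => i j; apply: fg.
Qed.

Lemma charpoly_nil f : charpoly f 0 = 1.
Proof. by rewrite /charpoly_graph /char_poly det_mx00. Qed.

Lemma char_mx_del_vertex f k (u : 'I_k.+1) :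
  row' u (col' u (char_mx f k.+1)) = char_mx (del_vertex f u) k.
Proof. by apply/matrixP => i j; rewrite !mxE /= (inj_eq (@lift_inj _ u)). Qed.

Lemma charpoly_isolated f k v : (v <= k)%N ->
  (forall j, (j <= k)%N -> ~~ f v j && ~~ f j v) ->
  charpoly f k.+1 = 'X * charpoly (del_vertex f v) k.
Proof.
rewrite -ltnS => hv f_v.
rewrite /charpoly_graph /char_poly (expand_det_row _ (Ordinal hv)) (bigD1 (Ordinal hv)) //=.
rewrite big1 ?addr0.
  rewrite char_mxE /= eqxx /cofactor char_mx_del_vertex -signr_odd oddD addbb mul1r.
  by have /andP[/negbTE-> _] := f_v v hv; rewrite subr0.
move=> j hj; rewrite char_mxE /=; have /andP[/negbTE-> _] := f_v j (ltn_ord j).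
by move: hj; rewrite eq_sym -val_eqE => /negbTE /= ->; rewrite subr0 mul0r.
Qed.

Lemma cofactor_char_mx_pendant f k u (hu : (u < k.+1)%N) :
  (forall j, (j <= k)%N -> f j k.+1 = (j == u)) ->
  cofactor (char_mx f k.+2) ord_max (widen_ord (leqnSn _) (Ordinal hu)) =
    charpoly (del_vertex f u) k.
Proof.
move=> f_u; rewrite {1}/cofactor /charpoly_graph /char_poly.
have bump_u_k : bump u k = k.+1 by rewrite /bump; lia.
have bump_lt t : (t < k.+1)%N -> bump k.+1 t = t by rewrite /bump; lia.
set M := row' _ _.
have minorE : row' (Ordinal hu) (col' ord_max M) = char_mx (del_vertex f u) k.
  apply/matrixP => i j; rewrite !mxE /= -[lift _ _ == _]val_eqE /=.
  have -> : bump k j = j by rewrite /bump; have := ltn_ord j; lia.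
  rewrite bump_lt ?(inj_eq (can_inj (bumpK u))) //.
  by have /= := ltn_ord i; rewrite /bump; lia.
rewrite (expand_det_col _ ord_max) (bigD1 (Ordinal hu)) //= big1 ?addr0.
  rewrite /cofactor minorE /M !mxE /= -[lift _ _ == _]val_eqE /= bump_lt // bump_u_k.
  rewrite f_u // eqxx (_ : (u == k.+1) = false) ?mulr0n ?sub0r; last lia.
  set s := (-1) ^+ (u + k); have ss : s * s = 1.
    by rewrite -exprD -signr_odd addnn odd_double.
  rewrite addSn exprS addnC -/s polyC1.
  by transitivity ((s * s) * \det (char_mx (del_vertex f u) k)); [ring | rewrite ss mul1r].
move=> i hi; rewrite /M !mxE /= -[lift _ _ == _]val_eqE /= bump_lt // bump_u_k.
rewrite f_u; last exact: ltn_ord i.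
have -> : (i == k.+1 :> nat) = false by have := ltn_ord i; lia.
by move: hi; rewrite -val_eqE => /negbTE /= ->; rewrite mulr0n subr0 mul0r.
Qed.

Lemma charpoly_pendant f k u : (u <= k)%N -> ~~ f k.+1 k.+1 ->
  (forall j, (j <= k)%N -> f k.+1 j = (j == u) /\ f j k.+1 = (j == u)) ->
  charpoly f k.+2 = 'X * charpoly f k.+1 + (-1) * charpoly (del_vertex f u) k.
Proof.
rewrite -ltnS => hu f_loop f_u; set u' := widen_ord (leqnSn _) (Ordinal hu).
have u'_max : u' != ord_max by rewrite -val_eqE /= neq_ltn hu.
rewrite {1}/charpoly_graph /char_poly (expand_det_row _ ord_max) (bigD1 ord_max) //=.
rewrite (bigD1 u') //= big1 ?addr0; last first.
  move=> j /andP[j_max j_u]; rewrite char_mxE /=.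
  have j_le_k : (j <= k)%N by move: j_max (ltn_ord j); rewrite -val_eqE /=; lia.
  have [-> _] := f_u j j_le_k; move: j_u j_max; rewrite -!val_eqE /= => /negbTE -> /negbTE.
  by rewrite eq_sym => ->; rewrite mulr0n subr0 mul0r.
rewrite cofactor_char_mx_pendant; last by move=> j /f_u[].
rewrite !char_mxE /= eqxx (negbTE f_loop) (_ : (k.+1 == u) = false); last lia.
have [-> _] := f_u u hu; rewrite eqxx mulr1n mulr0n subr0 sub0r polyC1 mulN1r.
congr (_ * _ - _).
rewrite /cofactor (char_mx_del_vertex f (@ord_max k.+1)) -signr_odd oddD addbb mul1r.
by apply: charpoly_ext => i j hi hj; rewrite /del_vertex /bump /=; congr f; lia.
Qed.

End CharPoly.

Lemma disjoint_set2 (T : finType) (a1 a2 b1 b2 : T) :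
  [disjoint [set a1; a2] & [set b1; b2]] = [&& a1 != b1, a1 != b2, a2 != b1 & a2 != b2].
Proof. by rewrite disjoints_subset subUset !sub1set !inE !negb_or -!andbA. Qed.

Definition matchings (f : rel nat) (k r : nat) : {set {set 'I_k * 'I_k}} :=
  [set M | @is_matching (rel_graph f k) M && (#|M| == r)].

Lemma card_matchings f k r : #|matchings f k r| = num_matchings (rel_graph f k) r.
Proof. by []. Qed.

Lemma is_matchingP k (f : rel nat) (M : {set 'I_k * 'I_k}) :
  reflect ({in M, forall e : 'I_k * 'I_k, (e.1 < e.2)%N && f e.1 e.2} /\
           {in M &, forall e1 e2 : 'I_k * 'I_k,
              e1 != e2 -> [disjoint [set e1.1; e1.2] & [set e2.1; e2.2]]})
          (@is_matching (rel_graph f k) M).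
Proof.
apply: (iffP andP) => [[/forall_inP H1 /forall_inP H2] | [H1 H2]].
  by split=> // e1 e2 h1 h2; apply/implyP; apply: (forall_inP (H2 e1 h1)).
split; apply/forall_inP => // e1 h1; apply/forall_inP => e2 h2; apply/implyP.
exact: H2.
Qed.

Section Embedding.
Variables (a b : nat) (f g : rel nat) (h : 'I_a -> 'I_b).
Hypothesis h_mono : {mono h : i j / (i < j)%N}.
Hypothesis h_adj : forall i j : 'I_a, f i j = g (h i) (h j).

Lemma emb_inj : injective h.
Proof.
move=> i j hij; apply: ord_inj; have := h_mono i j; have := h_mono j i.
by rewrite hij ltnn; lia.
Qed.

Definition emb_edge (e : 'I_a * 'I_a) : 'I_b * 'I_b := (h e.1, h e.2).

Lemma emb_edge_inj : injective emb_edge.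
Proof. by move=> [x1 x2] [y1 y2] [/emb_inj -> /emb_inj ->]. Qed.

Definition within_codom (M : {set 'I_b * 'I_b}) :=
  [forall e in M, (e.1 \in codom h) && (e.2 \in codom h)].

Lemma is_matching_imset (M : {set 'I_a * 'I_a}) :
  @is_matching (rel_graph f a) M -> @is_matching (rel_graph g b) (emb_edge @: M).
Proof.
case/is_matchingP => H1 H2; apply/is_matchingP; split.
  by move=> _ /imsetP[e he ->] /=; rewrite h_mono -h_adj; apply: H1.
move=> _ _ /imsetP[e1 h1 ->] /imsetP[e2 h2 ->] ne.
have := H2 e1 e2 h1 h2 (contra_neq (@congr1 _ _ emb_edge _ _) ne).
by rewrite !disjoint_set2 !(inj_eq emb_inj).
Qed.

Lemma is_matching_preimset (M : {set 'I_b * 'I_b}) :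
  @is_matching (rel_graph g b) M -> @is_matching (rel_graph f a) (emb_edge @^-1: M).
Proof.
case/is_matchingP => H1 H2; apply/is_matchingP; split.
  by move=> e; rewrite inE => /H1 /=; rewrite h_mono -h_adj.
move=> e1 e2; rewrite !inE => h1 h2 ne.
have := H2 _ _ h1 h2; rewrite (inj_eq emb_edge_inj) => /(_ ne).
by rewrite /= !disjoint_set2 !(inj_eq emb_inj).
Qed.

Lemma imset_preimset_within (M : {set 'I_b * 'I_b}) :
  within_codom M -> emb_edge @: (emb_edge @^-1: M) = M.
Proof.
move=> /forall_inP M_in; apply/setP => e; apply/imsetP/idP => [[e']|e_M].
  by rewrite inE => ? ->.
have /andP[/codomP[x ex] /codomP[y ey]] := M_in e e_M.
by exists (x, y); rewrite ?inE /emb_edge /= -ex -ey; case: (e) e_M.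
Qed.

Lemma within_codom_imset (M : {set 'I_a * 'I_a}) : within_codom (emb_edge @: M).
Proof. by apply/forall_inP => _ /imsetP[e _ ->] /=; rewrite !codom_f. Qed.

Lemma card_matchings_within_codom r :
  #|[set M in matchings g b r | within_codom M]| = num_matchings (rel_graph f a) r.
Proof.
rewrite -card_matchings -(card_imset _ (imset_inj emb_edge_inj)).
congr #|pred_of_set _|; apply/setP => M; rewrite !inE; apply/idP/imsetP.
  case/andP=> /andP[M_match /eqP <-] M_in; exists (emb_edge @^-1: M).
    rewrite inE is_matching_preimset //= -{2}(imset_preimset_within M_in).
    by rewrite card_imset //; apply: emb_edge_inj.
  by rewrite imset_preimset_within.
case=> M'; rewrite inE => /andP[M'_match /eqP <-] ->.
by rewrite is_matching_imset // card_imset ?eqxx ?within_codom_imset //; apply: emb_edge_inj.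
Qed.

End Embedding.

Lemma lift_mono n (w : 'I_n.+1) : {mono lift w : i j / (i < j)%N}.
Proof. by move=> i j; rewrite /= /bump; lia. Qed.

Lemma codom_lift n (w x : 'I_n.+1) : x != w -> x \in codom (lift w).
Proof. by case: (unliftP w x) => [j -> | ->]; [rewrite codom_f | rewrite eqxx]. Qed.

Lemma num_matchings_eq_adj n (a1 a2 : rel 'I_n) r :
  a1 =2 a2 -> num_matchings (SGraph a1) r = num_matchings (SGraph a2) r.
Proof.
move=> a12; apply: eq_card => M; rewrite !inE /is_matching /=.
by congr (_ && _ && _); apply: eq_forallb => e; rewrite a12.
Qed.

Lemma num_matchings_ext f g k r : (forall i j, (i < k)%N -> (j < k)%N -> f i j = g i j) ->
  num_matchings (rel_graph f k) r = num_matchings (rel_graph g k) r.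
Proof.
by move=> fg; apply: num_matchings_eq_adj => i j; apply: fg.
Qed.

Lemma num_matchings_isolated f k v r : (v <= k)%N ->
  (forall j, (j <= k)%N -> ~~ f v j && ~~ f j v) ->
  num_matchings (rel_graph f k.+1) r = num_matchings (rel_graph (del_vertex f v) k) r.
Proof.
rewrite -ltnS => hv f_v.
rewrite -(@card_matchings_within_codom _ _ _ f (lift (Ordinal hv)) (lift_mono _)) //.
rewrite -card_matchings; congr #|pred_of_set _|; apply/setP => M; rewrite !inE.
case M_match: (@is_matching (rel_graph f k.+1) M) => //=; case: (#|M| == r) => //=.
have /is_matchingP[f_M _] := M_match; symmetry; apply/forall_inP => e e_M.
have /andP[_ f_e] := f_M e e_M.
apply/andP; split; apply: codom_lift; apply: (contraTneq _ f_e) => -> /=.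
  by have /andP[/negbTE-> _] := f_v e.2 (ltn_ord e.2).
by have /andP[_ /negbTE->] := f_v e.1 (ltn_ord e.1).
Qed.

Lemma is_matching_subset k f (M M' : {set 'I_k * 'I_k}) :
  @is_matching (rel_graph f k) M -> M' \subset M -> @is_matching (rel_graph f k) M'.
Proof.
move=> /is_matchingP[H1 H2] /subsetP M'M; apply/is_matchingP; split.
  by move=> e /M'M; apply: H1.
by move=> e1 e2 /M'M h1 /M'M h2; apply: H2.
Qed.

Lemma is_matching_setU1 k f (M : {set 'I_k * 'I_k}) (E : 'I_k * 'I_k) :
  @is_matching (rel_graph f k) M -> (E.1 < E.2)%N -> f E.1 E.2 ->
  (forall e, e \in M -> [disjoint [set e.1; e.2] & [set E.1; E.2]]) ->
  @is_matching (rel_graph f k) (E |: M).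
Proof.
move=> /is_matchingP[H1 H2] E_lt E_f E_M; apply/is_matchingP; split.
  by move=> e /setU1P[-> | /H1 //]; rewrite /= E_lt.
move=> e1 e2 /setU1P[-> | h1] /setU1P[-> | h2]; rewrite ?eqxx //.
- by rewrite disjoint_sym => _; apply: E_M.
- by move=> _; apply: E_M.
- exact: H2.
Qed.

Section PendantMatchings.
Variables (f : rel nat) (k u : nat).
Hypothesis hu : (u < k.+1)%N.
Hypothesis f_u : forall j, (j <= k)%N -> f j k.+1 = (j == u).

Let E : 'I_k.+2 * 'I_k.+2 := (lift ord_max (Ordinal hu), ord_max).

Lemma matching_edge_avoid_max M e : @is_matching (rel_graph f k.+2) M -> e \in M ->
  e != E -> (e.1 != ord_max) && (e.2 != ord_max).
Proof.
move=> /is_matchingP[H1 _] /H1 /andP[lt_e f_e] e_E; apply/andP; split.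
  by apply: contraTneq lt_e => ->; rewrite -leqNgt leq_ord.
apply: contra e_E => /eqP e2_max; have e1_le_k : (e.1 <= k)%N.
  by move: lt_e (ltn_ord e.2); rewrite e2_max /=; lia.
move: f_e; rewrite e2_max /= f_u // => /eqP e1_u.
apply/eqP; case: e e2_max e1_u {lt_e e1_le_k} => e1 e2 /= -> e1_u.
by rewrite /E; congr (_, _); apply: ord_inj; rewrite lift_max.
Qed.

Lemma card_matchings_avoiding r :
  #|[set M in matchings f k.+2 r | E \notin M]| = num_matchings (rel_graph f k.+1) r.
Proof.
rewrite -(@num_matchings_ext (del_vertex f k.+1)); last first.
  by move=> i j hi hj; rewrite /del_vertex /bump; congr f; lia.
rewrite -(@card_matchings_within_codom _ _ _ f (lift ord_max)) //; last exact: lift_mono.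
congr #|pred_of_set _|; apply/setP => M; rewrite !inE.
case M_match: (@is_matching (rel_graph f k.+2) M) => //=.
case: (#|M| == r) => //=; apply/idP/idP => [E_M | /forall_inP M_in].
  apply/forall_inP => e e_M; have e_E : e != E by apply: contraNneq E_M => <-.
  by have /andP[e1 e2] := matching_edge_avoid_max M_match e_M e_E; rewrite !codom_lift.
apply: contraT => /negbNE /M_in /andP[_ /codomP[y /eqP]].
by rewrite eq_sym lift_eqF.
Qed.

Definition lift_off_edge (i : 'I_k) : 'I_k.+2 := lift ord_max (lift (Ordinal hu) i).

Lemma lift_off_edge_mono : {mono lift_off_edge : i j / (i < j)%N}.
Proof. by move=> i j; rewrite !lift_mono. Qed.

Lemma val_lift_off_edge i : lift_off_edge i = bump u i :> nat.
Proof. by rewrite /lift_off_edge lift_max. Qed.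

Lemma codom_lift_off_edge x : x != E.1 -> x != ord_max -> x \in codom lift_off_edge.
Proof.
move=> x_u x_max; case: (unliftP ord_max x) x_u => [y -> | x_eq].
  2: by rewrite x_eq eqxx in x_max.
rewrite (inj_eq (@lift_inj _ _)); case: (unliftP (Ordinal hu) y) => [z -> _ | ->].
  exact: codom_f.
by rewrite eqxx.
Qed.

Lemma lift_off_edge_neq_E1 i : (lift_off_edge i == E.1) = false.
Proof. by rewrite (inj_eq (@lift_inj _ _)) eq_sym eq_liftF. Qed.

Lemma lift_off_edge_neq_max i : (lift_off_edge i == ord_max) = false.
Proof. exact: lift_eqF. Qed.

Lemma card_matchings_containing r :
  #|[set M in matchings f k.+2 r.+1 | E \in M]| = num_matchings (rel_graph (del_vertex f u) k) r.
Proof.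
rewrite -(@card_matchings_within_codom _ _ _ f lift_off_edge lift_off_edge_mono); last first.
  by move=> i j; rewrite !val_lift_off_edge.
rewrite -(card_in_imset (f := fun M => M :\ E)); last first.
  move=> M1 M2; rewrite !inE => /andP[_ M1_E] /andP[_ M2_E] eq.
  by rewrite -(setD1K M1_E) -(setD1K M2_E) eq.
congr #|pred_of_set _|; apply/setP => M'; apply/imsetP/idP.
  case=> M; rewrite !inE => /andP[/andP[M_match /eqP M_card] E_M] ->.
  apply/andP; split.
    rewrite (is_matching_subset M_match) ?subsetDl //=.
    by move: M_card; rewrite (cardsD1 E M) E_M add1n => -[->].
  apply/forall_inP => e; rewrite in_setD1 => /andP[e_E e_M].
  have /is_matchingP[_ H2] := M_match; have := H2 e E e_M E_M e_E.
  by rewrite disjoint_set2 => /and4P[? ? ? ?]; rewrite !codom_lift_off_edge.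
rewrite !inE => /andP[/andP[M'_match /eqP M'_card] /forall_inP M'_in].
have E_M' : E \notin M'.
  by apply/negP => /M'_in /andP[_ /codomP[y /eqP]]; rewrite eq_sym lift_off_edge_neq_max.
exists (E |: M'); last by rewrite setU1K.
rewrite !inE eqxx cardsU1 E_M' M'_card eqxx !andbT.
have bump_u : bump k.+1 u = u by rewrite /bump; lia.
apply: is_matching_setU1 => //=; rewrite ?bump_u ?f_u //.
move=> e /M'_in /andP[/codomP[y1 ->] /codomP[y2 ->]].
by rewrite disjoint_set2 !lift_off_edge_neq_E1 !lift_off_edge_neq_max.
Qed.

Lemma num_matchings_pendant r : num_matchings (rel_graph f k.+2) r.+1 =
  num_matchings (rel_graph f k.+1) r.+1 + num_matchings (rel_graph (del_vertex f u) k) r.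
Proof.
rewrite -card_matchings_avoiding -card_matchings_containing addnC -card_matchings.
rewrite -(cardsID [set M : {set 'I_k.+2 * 'I_k.+2} | E \in M]).
by rewrite setIdE; congr (_ + _); apply: eq_card => M; rewrite !inE andbC.
Qed.

End PendantMatchings.

Section MatchingGenpoly.
Local Open Scope ring_scope.

Lemma num_matchings0 f k : num_matchings (rel_graph f k) 0 = 1%N.
Proof.
rewrite -card_matchings (_ : matchings f k 0 = [set set0]) ?cards1 //.
apply/setP => M; rewrite !inE cards_eq0; case: eqP => [-> | _]; last by rewrite andbF.
by rewrite andbT; apply/is_matchingP; split=> [e | e1 e2]; rewrite inE.
Qed.

Lemma num_matchings_eq0 f k r : (k < r)%N -> num_matchings (rel_graph f k) r = 0%N.
Proof.
move=> k_lt_r; rewrite -card_matchings (_ : matchings f k r = set0) ?cards0 //.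
apply/setP => M; rewrite !inE; apply/negP => /andP[/is_matchingP[_ M_disj] /eqP M_card].
have : (#|[set e.1 | e in M]| <= k)%N by rewrite -[X in (_ <= X)%N](card_ord k) max_card.
rewrite card_in_imset ?M_card; first lia.
move=> e1 e2 h1 h2 /= e12; apply/eqP; apply: contraT => ne.
by have := M_disj e1 e2 h1 h2 ne; rewrite disjoint_set2 e12 eqxx.
Qed.

Definition matching_genpoly (f : rel nat) (k : nat) : {poly int} :=
  \poly_(r < k.+1) (num_matchings (rel_graph f k) r)%:R.

Lemma coef_matching_genpoly f k r :
  (matching_genpoly f k)`_r = (num_matchings (rel_graph f k) r)%:R.
Proof. by rewrite coef_poly; case: ltnP => // ?; rewrite num_matchings_eq0. Qed.

Lemma matching_genpoly_ext f g k : (forall i j, (i < k)%N -> (j < k)%N -> f i j = g i j) ->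
  matching_genpoly f k = matching_genpoly g k.
Proof.
by move=> fg; apply/polyP => r; rewrite !coef_matching_genpoly (num_matchings_ext r fg).
Qed.

Lemma matching_genpoly_nil f : matching_genpoly f 0 = 1.
Proof.
apply/polyP => r; rewrite coef_matching_genpoly coef1.
by case: r => [|r]; rewrite ?num_matchings0 ?num_matchings_eq0.
Qed.

Lemma matching_genpoly_path_dunion_W_sym m n : (6 <= m)%N -> (6 <= n)%N ->
  matching_genpoly (path_dunion (m - 5).+1 (W_edge (n - 1))) ((m - 5).+1 + (n - 1).+1) =
  matching_genpoly (path_dunion (n - 5).+1 (W_edge (m - 1))) ((n - 5).+1 + (m - 1).+1).
Proof.
move=> hm hn; apply: (@Phi_path_dunion_W_sym _ 1 'X matching_genpoly matching_genpoly_ext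
  _ _ matching_genpoly_nil m n hm hn).
- move=> f k v hv f_v; apply/polyP => r.
  by rewrite mul1r !coef_matching_genpoly (num_matchings_isolated r hv f_v).
- move=> f k u hu _ f_u; apply/polyP => r.
  rewrite mul1r coefD coefXM !coef_matching_genpoly; case: r => [|r] /=.
    by rewrite !num_matchings0 addr0.
  by rewrite (@num_matchings_pendant f k u) ?natrD // => j /f_u[].
Qed.

End MatchingGenpoly.

Lemma charpoly_path_dunion_W_sym m n : (6 <= m)%N -> (6 <= n)%N ->
  charpoly_graph (rel_graph (path_dunion (m - 5).+1 (W_edge (n - 1))) ((m - 5).+1 + (n - 1).+1)) =
  charpoly_graph (rel_graph (path_dunion (n - 5).+1 (W_edge (m - 1))) ((n - 5).+1 + (m - 1).+1)).
Proof.
exact: (@Phi_path_dunion_W_sym _ 'X (-1) (fun f k => charpoly_graph (rel_graph f k))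
  charpoly_ext charpoly_isolated charpoly_pendant charpoly_nil).
Qed.

Lemma matching_energy_eq G H : nv G = nv H ->
  (forall r, num_matchings G r = num_matchings H r) -> matching_energy G = matching_energy H.
Proof.
move=> nvGH num_GH; rewrite /matching_energy /matching_roots.
suff -> : matching_poly G = matching_poly H by [].
by rewrite /matching_poly; under eq_bigr do rewrite num_GH; rewrite nvGH.
Qed.

Lemma adj_dunion_path_W t N :
  @adj (dunion (path_graph t) (W_graph N)) =2 path_dunion t.+1 (W_edge N).
Proof.
rewrite /dunion => i j /=.
case: splitP => i' ->; case: splitP => j' -> /=; rewrite /path_dunion.
- have hi : i' < t.+1 := ltn_ord i'; have hj : j' < t.+1 := ltn_ord j'.
  have -> : (t < i') = false by lia.
  by rewrite hi hj /= orbF.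
- have hi : i' < t.+1 := ltn_ord i'; have -> : (t < i') = false by lia.
  have -> : (t.+1 + j' < t.+1) = false by lia.
  by rewrite !andbF.
- have hj : j' < t.+1 := ltn_ord j'; have -> : (t < j') = false by lia.
  have -> : (t.+1 + i' < t.+1) = false by lia.
  by rewrite !andbF.
- have -> : (t.+1 + i' < t.+1) = false by lia.
  by rewrite !ltn_addr ?addKn.
Qed.

Lemma charpoly_dunion_path_W t N :
  charpoly_graph (dunion (path_graph t) (W_graph N)) =
  charpoly_graph (rel_graph (path_dunion t.+1 (W_edge N)) (t.+1 + N.+1)).
Proof. exact: charpoly_graph_eq_adj (@adj_dunion_path_W t N). Qed.

Lemma num_matchings_dunion_path_W t N r :
  num_matchings (dunion (path_graph t) (W_graph N)) r =
  num_matchings (rel_graph (path_dunion t.+1 (W_edge N)) (t.+1 + N.+1)) r.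
Proof. exact: num_matchings_eq_adj (@adj_dunion_path_W t N). Qed.

Unset Implicit Arguments.
Local Open Scope ring_scope.

Theorem theorem9 (m n : nat) (hm : (6 <= m)%N) (hn : (6 <= n)%N) :
  charpoly_graph (dunion (path_graph (m - 5)) (W_graph (n - 1)))
    = charpoly_graph (dunion (path_graph (n - 5)) (W_graph (m - 1)))
  /\
  matching_energy (dunion (path_graph (m - 5)) (W_graph (n - 1)))
    = matching_energy (dunion (path_graph (n - 5)) (W_graph (m - 1))).
Proof.
split; first by rewrite !charpoly_dunion_path_W charpoly_path_dunion_W_sym.
apply: matching_energy_eq => [|r]; first by rewrite /=; lia.
rewrite !num_matchings_dunion_path_W.
have := congr1 (coefp r) (matching_genpoly_path_dunion_W_sym hm hn).
by rewrite /= !coef_matching_genpoly => /eqP; rewrite eqr_nat => /eqP.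
Qed.
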